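(* Let $T, D, E$ be positive integers ($E$ may also be $0$) and let $k$ be a positive integer with $k \ge 2T \log(D)/\log(2T)$. Let $p_1 < p_2 < \cdots < p_{k+2E}$ be primes with $2T < p_1$, and for each $i$ let $\zeta_i \ne 1$ be a $p_i$-th root of unity in $\mathbb{C}$. Let $f \in \mathbb{Q}[x]$ have at most $T$ nonzero terms and $\deg f \le D$, and suppose we are given values $y_i = f(\zeta_i) + \epsilon_i$, $1 \le i \le k+2E$, where $\epsilon_i \in \mathbb{C}$ and at most $E$ of the $\epsilon_i$ are nonzero. If $g \in \mathbb{Q}[x]$ has at most $T$ nonzero terms, $\deg g \le D$, and $g(\zeta_i) = y_i$ for at least $k+E$ indices $i$, then $g = f$. *)

From HB Require Import structures.
From mathcomp Require Import all_boot all_order all_algebra.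
From mathcomp Require Import complex.
From mathcomp Require Import reals Rstruct.
From Stdlib Require Reals.
Set Implicit Arguments. Unset Strict Implicit. Unset Printing Implicit Defensive.
Import Order.TTheory GRing.Theory Num.Theory.
Local Open Scope ring_scope.

Definition CC : Type := (Rdefinitions.R)[i].

Definition nterms (f : {poly rat}) : nat := count (fun c => c != 0) f.

Definition evalC (f : {poly rat}) (z : CC) : CC := (map_poly (ratr : rat -> CC) f).[z].

(* Let h = g - f and suppose h <> 0.  Then h has at most 2T terms, degree at
   most D, and vanishes at zeta_i for at least k indices i (those where g fits
   uncorrupted data).  If a nontrivial p-th root of unity zeta, p prime, is a
   root of h and h has fewer than p terms, reduce h modulo X^p - 1: the result
   is a rational polynomial of length p vanishing at zeta, hence a multiple of
   the irreducible 1 + X + ... + X^(p-1), and it is 0 because fewer than p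
   residues occur among the exponents of h.  So the lowest exponent e0 of h is
   congruent mod p to another exponent e, i.e. p divides the product of the
   gaps e - e0, which is at most D^(2T).  The k distinct primes, all > 2T,
   give (2T+1)^k <= D^(2T), while the hypothesis on k says D^(2T) <= (2T)^k. *)

(* Imported first, so that ssrnat's notations (e.g. m ^ n) take precedence. *)
From Stdlib Require Import Rdefinitions Raxioms RIneq Rpower Rfunctions Lra.
From HB Require Import structures.
From mathcomp Require Import all_boot all_order all_algebra all_field.
From mathcomp Require Import complex.
From mathcomp Require Import reals Rstruct.
Import Order.TTheory GRing.Theory Num.Theory.

Set Implicit Arguments.
Unset Strict Implicit.
Unset Printing Implicit Defensive.

Lemma expn_le_of_ln_ratio (a D k : nat) : (1 < a)%N -> (0 < D)%N ->
  Rle (Rdiv (Rmult (INR a) (ln (INR D))) (ln (INR a))) (INR k) ->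
  (D ^ a <= a ^ k)%N.
Proof.
move=> a_gt1 D_gt0 le_ratio.
have a_gt1R : Rlt 1 (INR a) by apply/lt_1_INR/ssrnat.ltP.
have ln_a_gt0 : Rlt 0 (ln (INR a)) by rewrite -ln_1; apply: ln_increasing; lra.
have D_gt0R : Rlt 0 (INR D) by apply/lt_0_INR/ssrnat.ltP.
have le_ln : Rle (ln (pow (INR D) a)) (ln (pow (INR a) k)).
  rewrite !ln_pow; try lra.
  have := Rmult_le_compat_r _ _ _ (Rlt_le _ _ ln_a_gt0) le_ratio.
  by rewrite /Rdiv Rmult_assoc Rinv_l ?Rmult_1_r //; apply: Rgt_not_eq.
rewrite -(ler_nat Rdefinitions.R) !natrX -!INRE -!RpowE; apply/RleP.
apply: Rnot_lt_le => lt_pow.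
have := ln_increasing _ _ (pow_lt (INR a) k ltac:(lra)) lt_pow.
move=> ?; lra.
Qed.

Local Open Scope ring_scope.

Lemma nterms_card (n : nat) (h : {poly rat}) : (size h <= n)%N ->
  nterms h = #|[pred e : 'I_n | h`_e != 0]|.
Proof.
move=> size_h.
have tail0 : count (fun e => h`_e != 0) (iota (size h) (n - size h)) = 0%N.
  rewrite (@eq_in_count _ _ pred0) ?count_pred0 // => e.
  by rewrite mem_iota => /andP[le_size _]; rewrite nth_default ?eqxx.
have -> : nterms h = count (fun e => h`_e != 0) (iota 0 n).
  rewrite /nterms -{1}(mkseq_nth 0 h) count_map -(subnKC size_h) iotaD.
  by rewrite count_cat tail0 addn0.
by rewrite -val_enum_ord count_map enumT cardE /enum_mem size_filter.
Qed.

Lemma nterms_sub (g f : {poly rat}) : (nterms (g - f) <= nterms g + nterms f)%N.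
Proof.
set n := maxn (size g) (size f).
have size_sub : (size (g - f)%R <= n)%N by rewrite (leq_trans (size_polyD _ _)) ?size_polyN.
rewrite !(nterms_card (n := n)) ?leq_maxl ?leq_maxr // -cardUI.
apply: leq_trans (leq_addr _ _); apply/subset_leq_card/subsetP => e /=.
rewrite !inE coefB; apply: contraR; rewrite negb_or !negbK.
by case/andP=> /eqP-> /eqP->; rewrite subrr.
Qed.

Definition geom_poly (p : nat) : {poly rat} := \poly_(i < p) 1.

Lemma size_geom_poly p : size (geom_poly p) = p.
Proof. by rewrite size_poly_eq ?oner_eq0. Qed.

Lemma root_geom_poly (F : numFieldType) p (x : F) : x ^+ p = 1 -> x != 1 ->
  root (map_poly ratr (geom_poly p)) x.
Proof.
move=> xp1 x_neq1.
have : (x - 1) * \sum_(i < p) x ^+ i = 0 by rewrite -subrX1 xp1 subrr.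
move/eqP; rewrite mulf_eq0 subr_eq0 (negPf x_neq1) /= => /eqP sum_eq0.
apply/eqP; rewrite (@horner_coef_wide _ p) ?size_map_poly ?size_geom_poly //.
rewrite -[RHS]sum_eq0; apply: eq_bigr => i _.
by rewrite coef_map coef_poly ltn_ord /= rmorph1 mul1r.
Qed.

Lemma geom_poly_irreducible p : prime p -> irreducible_poly (geom_poly p).
Proof.
move=> p_prime; have p_gt0 := prime_gt0 p_prime.
have [z z_prim] := C_prim_root_exists p_gt0.
have z_neq1 : z != 1.
  by rewrite -[z]expr1 -(prim_order_dvd z_prim) dvdn1 gtn_eqF ?prime_gt1.
have geom_neq0 : geom_poly p != 0 by rewrite -size_poly_gt0 size_geom_poly.
apply: (subfx_irreducibleP (root_geom_poly (prim_expr_order z_prim) z_neq1) geom_neq0).1.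
move=> q q_root q_neq0; have [m [min_m _] dvd_m] := minCpolyP z.
have size_m : size m = p.
  rewrite -(@size_map_poly _ algC ratr) -min_m (minCpoly_cyclotomic z_prim).
  by rewrite size_cyclotomic totient_prime // prednK.
by rewrite size_geom_poly -size_m dvdp_leq // -dvd_m.
Qed.

Lemma geom_poly_size_min (F : numFieldType) p (x : F) (q : {poly rat}) :
  prime p -> x ^+ p = 1 -> x != 1 -> q != 0 -> root (map_poly ratr q) x ->
  (p <= size q)%N.
Proof.
move=> p_prime xp1 x_neq1 q_neq0 q_root.
have geom_neq0 : geom_poly p != 0 by rewrite -size_poly_gt0 size_geom_poly prime_gt0.
have min_geom := (subfx_irreducibleP (root_geom_poly xp1 x_neq1) geom_neq0).2.
rewrite -[X in (X <= _)%N](size_geom_poly p).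
by apply: min_geom => //; apply: geom_poly_irreducible.
Qed.

Lemma root_unity_coef_const (F : numFieldType) p (x : F) (r : {poly rat}) :
  prime p -> x ^+ p = 1 -> x != 1 -> (size r <= p)%N ->
  root (map_poly ratr r) x -> forall j, (j < p)%N -> r`_j = r`_p.-1.
Proof.
move=> p_prime xp1 x_neq1 size_r r_root.
set c := r`_p.-1; have p_gt0 := prime_gt0 p_prime.
suff r_eq : r = c *: geom_poly p.
  by move=> j lt_jp; rewrite [in LHS]r_eq coefZ coef_poly lt_jp mulr1.
have size_diff : (size (r - c *: geom_poly p)%R <= p.-1)%N.
  apply/leq_sizeP => j le_j; rewrite coefB coefZ coef_poly.
  case: ltnP => [lt_jp | le_pj]; last by rewrite mulr0 subr0 nth_default ?(leq_trans size_r).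
  have -> : j = p.-1 by apply/eqP; rewrite eqn_leq le_j andbT -ltnS prednK.
  by rewrite mulr1 subrr.
have root_diff : root (map_poly ratr (r - c *: geom_poly p)) x.
  rewrite rmorphB /= map_polyZ rootE hornerD hornerN hornerZ (eqP r_root).
  by rewrite (eqP (root_geom_poly xp1 x_neq1)) mulr0 subrr.
apply/eqP; rewrite -subr_eq0; apply: contraTT size_diff => diff_neq0.
by rewrite -ltnNge prednK // (geom_poly_size_min p_prime xp1 x_neq1).
Qed.

(* The reduction of h modulo X^p - 1. *)
Definition foldp (R : nzSemiRingType) (p : nat) (h : {poly R}) : {poly R} :=
  \poly_(j < p) \sum_(e < size h | (e %% p == j)%N) h`_e.

Lemma horner_foldp (R : comNzRingType) p (h : {poly R}) (x : R) :
  (0 < p)%N -> x ^+ p = 1 -> (foldp p h).[x] = h.[x].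
Proof.
move=> p_gt0 xp1.
rewrite (@horner_coef_wide _ p (foldp p h)) ?size_poly // horner_coef.
under eq_bigr => j _ do rewrite coef_poly ltn_ord mulr_suml.
rewrite (exchange_big_dep xpredT) //=; apply: eq_bigr => e _.
by rewrite (big_pred1 (Ordinal (ltn_pmod e p_gt0))) ?expr_mod.
Qed.

Lemma map_foldp (F : fieldType) (R : nzRingType) (f : {rmorphism F -> R}) p
    (h : {poly F}) :
  map_poly f (foldp p h) = foldp p (map_poly f h).
Proof.
apply/polyP => j; rewrite coef_map !coef_poly; case: ifP => _; last exact: rmorph0.
by rewrite raddf_sum size_map_poly; apply: eq_bigr => e _; rewrite coef_map.
Qed.

Lemma leq_nterms_foldp p (h : {poly rat}) : (0 < p)%N ->
  (forall j, (j < p)%N -> (foldp p h)`_j != 0) -> (p <= nterms h)%N.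
Proof.
move=> p_gt0 coef_neq0; rewrite (nterms_card (leqnn _)).
pose res (e : 'I_(size h)) : 'I_p := Ordinal (ltn_pmod e p_gt0).
rewrite -[X in (X <= _)%N]card_ord -cardsT; apply: leq_trans (leq_imset_card res _).
apply/subset_leq_card/subsetP => j _; apply: contraT => j_notin.
have := coef_neq0 j (ltn_ord j); rewrite coef_poly ltn_ord big1 ?eqxx // => e /eqP res_e.
apply: contraNeq j_notin => he_neq0; apply/imsetP; exists e; first by rewrite inE.
exact: val_inj.
Qed.

Definition trail_exp (R : nzSemiRingType) (h : {poly R}) : nat :=
  find (fun c => c != 0) h.

Definition gap_prod (R : nzSemiRingType) (h : {poly R}) : nat :=
  \prod_(e < size h | (trail_exp h < e)%N && (h`_e != 0)) (e - trail_exp h).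

Section TrailExp.
Variables (R : nzSemiRingType) (h : {poly R}).

Lemma has_coef_neq0 : h != 0 -> has (fun c => c != 0) h.
Proof.
move=> h_neq0; apply/hasP; exists (lead_coef h); last by rewrite lead_coef_eq0.
by rewrite lead_coefE mem_nth // prednK // size_poly_gt0.
Qed.

Lemma coef_trail_exp : h != 0 -> h`_(trail_exp h) != 0.
Proof. by move/has_coef_neq0/(nth_find 0). Qed.

Lemma trail_exp_lt_size : h != 0 -> (trail_exp h < size h)%N.
Proof. by move/has_coef_neq0; rewrite has_find. Qed.

Lemma trail_exp_min e : h`_e != 0 -> (trail_exp h <= e)%N.
Proof. by apply: contraTT; rewrite -ltnNge => /(before_find 0) ->. Qed.

Lemma gap_prod_gt0 : (0 < gap_prod h)%N.
Proof. by apply: prodn_cond_gt0 => e /andP[lt_e _]; rewrite subn_gt0. Qed.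

End TrailExp.

Lemma gap_prod_le (D : nat) (h : {poly rat}) : (0 < D)%N -> (size h <= D.+1)%N ->
  (gap_prod h <= D ^ nterms h)%N.
Proof.
move=> D_gt0 size_h; rewrite (nterms_card (leqnn _)).
apply: (@leq_trans (\prod_(e < size h | (trail_exp h < e)%N && (h`_e != 0)) D)).
  apply: leq_prod => e _; rewrite (leq_trans (leq_subr _ _)) // -ltnS.
  exact: leq_trans (ltn_ord e) size_h.
rewrite prod_nat_const leq_pexp2l //; apply/subset_leq_card/subsetP => e.
by rewrite !inE => /andP[].
Qed.

Lemma dvdn_gap_prod_foldp (R : nzSemiRingType) p (h : {poly R}) :
  (0 < p)%N -> h != 0 -> (foldp p h)`_(trail_exp h %% p) = 0 ->
  (p %| gap_prod h)%N.
Proof.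
move=> p_gt0 h_neq0; set t := trail_exp h; have t_lt := trail_exp_lt_size h_neq0.
rewrite coef_poly ltn_pmod // (bigD1 (Ordinal t_lt)) //=; apply: contra_eqT => p_ndvd.
rewrite big1 ?addr0 ?coef_trail_exp // => e /andP[/eqP mod_e e_neq_t].
apply: contraNeq p_ndvd => he_neq0.
have lt_te : (t < e)%N by rewrite ltn_neqAle trail_exp_min // andbT eq_sym; exact: e_neq_t.
rewrite /gap_prod (bigD1 e) /= ?lt_te ?he_neq0 // dvdn_mulr //.
by rewrite -eqn_mod_dvd ?(ltnW lt_te) // mod_e.
Qed.

Lemma prime_dvd_gap_prod (F : numFieldType) p (x : F) (h : {poly rat}) :
  prime p -> x ^+ p = 1 -> x != 1 -> h != 0 -> (nterms h < p)%N ->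
  root (map_poly ratr h) x -> (p %| gap_prod h)%N.
Proof.
move=> p_prime xp1 x_neq1 h_neq0 nterms_lt h_root; have p_gt0 := prime_gt0 p_prime.
set c := foldp p h.
have c_root : root (map_poly ratr c) x.
  by rewrite /root map_foldp horner_foldp.
have c_const := root_unity_coef_const p_prime xp1 x_neq1 (size_poly _ _) c_root.
have c_top : c`_p.-1 = 0.
  apply/eqP; apply: contraTT nterms_lt => c_neq0; rewrite -leqNgt.
  by apply: leq_nterms_foldp => // j lt_jp; rewrite c_const.
by apply: dvdn_gap_prod_foldp; rewrite // c_const ?ltn_pmod.
Qed.

Lemma prod_primes_dvdn (s : seq nat) n : uniq s -> all prime s ->
  {in s, forall q, q %| n}%N -> (\prod_(q <- s) q %| n)%N.
Proof.
elim: s => [|q s IHs] /=; first by rewrite big_nil dvd1n.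
case/andP=> q_notin uniq_s /andP[q_prime primes_s] dvd_n.
have dvd_s : {in s, forall r, r %| n}%N.
  by move=> r r_in; apply: dvd_n; rewrite inE r_in orbT.
rewrite big_cons Gauss_dvd ?IHs ?dvd_n ?mem_head //.
rewrite prime_coprime // Euclid_dvd_prod // big_has; apply/hasPn => r r_in.
rewrite dvdn_prime2 // ?(allP primes_s r r_in) //.
by apply: contraNneq q_notin => ->.
Qed.

Lemma expn_size_le_prime_divisors (s : seq nat) m n : (0 < n)%N -> uniq s ->
  {in s, forall q, [&& prime q, m < q & q %| n]}%N -> (m.+1 ^ size s <= n)%N.
Proof.
move=> n_gt0 uniq_s s_prop.
have primes_s : all prime s by apply/allP => q /s_prop /and3P[].
have dvd_s : {in s, forall q, q %| n}%N by move=> q /s_prop /and3P[].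
apply: leq_trans (dvdn_leq n_gt0 (prod_primes_dvdn uniq_s primes_s dvd_s)).
rewrite -iter_muln_1 -count_predT -big_const_seq.
by rewrite !big_seq; apply: leq_prod => q /s_prop /and3P[].
Qed.

Lemma incr_ord_inj n (p : nat -> nat) :
  (forall i j, (i < j)%N -> (j < n)%N -> (p i < p j)%N) ->
  injective (fun i : 'I_n => p i).
Proof.
move=> p_incr i j /= eq_p; apply: val_inj; case: (ltngtP i j) => // lt_ij.
  by have := p_incr _ _ lt_ij (ltn_ord j); rewrite eq_p ltnn.
by have := p_incr _ _ lt_ij (ltn_ord i); rewrite eq_p ltnn.
Qed.

Lemma sparse_root_unity_bound (F : numFieldType) (I : eqType) (s : seq I)
    (p : I -> nat) (z : I -> F) (h : {poly rat}) (t D : nat) :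
  h != 0 -> (0 < D)%N -> (nterms h <= t)%N -> (size h <= D.+1)%N ->
  uniq (map p s) ->
  {in s, forall i, [/\ prime (p i), (t < p i)%N, z i ^+ p i = 1, z i != 1
                     & root (map_poly ratr h) (z i)]} ->
  (t.+1 ^ size s <= D ^ t)%N.
Proof.
move=> h_neq0 D_gt0 nterms_h size_h uniq_ps roots.
apply: leq_trans (leq_trans (gap_prod_le D_gt0 size_h) (leq_pexp2l D_gt0 nterms_h)).
rewrite -(size_map p); apply: expn_size_le_prime_divisors (gap_prod_gt0 h) uniq_ps _.
move=> _ /mapP[i /roots[p_prime lt_tp zp1 z_neq1 h_root] ->].
by rewrite p_prime lt_tp (prime_dvd_gap_prod p_prime zp1) // (leq_ltn_trans nterms_h).
Qed.

Theorem corollary3 (T D E k : nat) (p : nat -> nat) (zeta : nat -> CC)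
    (f g : {poly rat}) (eps y : nat -> CC) :
  (0 < T)%N -> (0 < D)%N -> (0 < k)%N ->
  (Rdefinitions.Rle (Rdefinitions.Rdiv
       (Rdefinitions.Rmult (Raxioms.INR (2 * T)) (Rpower.ln (Raxioms.INR D)))
       (Rpower.ln (Raxioms.INR (2 * T)))) (Raxioms.INR k)) ->
  (forall i, (i < k + 2 * E)%N -> prime (p i)) ->
  (forall i j, (i < j)%N -> (j < k + 2 * E)%N -> (p i < p j)%N) ->
  (2 * T < p 0)%N ->
  (forall i, (i < k + 2 * E)%N -> (p i).-unity_root (zeta i) /\ zeta i != 1) ->
  (nterms f <= T)%N -> (size f <= D.+1)%N ->
  (forall i, (i < k + 2 * E)%N -> y i = evalC f (zeta i) + eps i) ->
  (#|[set i : 'I_(k + 2 * E) | eps i != 0%R]| <= E)%N ->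
  (nterms g <= T)%N -> (size g <= D.+1)%N ->
  (k + E <= #|[set i : 'I_(k + 2 * E) | evalC g (zeta i) == y i]|)%N ->
  g = f.
Proof.
move=> T_gt0 D_gt0 k_gt0 le_ratio p_prime p_incr p0_big zeta_root nterms_f size_f
  y_def card_err nterms_g size_g card_agree.
apply/eqP; rewrite -subr_eq0; apply/negPn/negP => h_neq0.
set err := [set i : 'I_(k + 2 * E) | eps i != 0].
set good := [set i : 'I_(k + 2 * E) | evalC g (zeta i) == y i] :\: err.
have card_good : (k <= #|good|)%N.
  rewrite cardsD -[X in (X <= _)%N](addnK E).
  exact: leq_sub card_agree (leq_trans (subset_leq_card (subsetIr _ _)) card_err).
have p_big (i : 'I_(k + 2 * E)) : (2 * T < p i)%N.
  by case: i => [[|i] lt_i] //; apply: ltn_trans p0_big (p_incr 0%N i.+1 _ lt_i).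
have root_h : {in good, forall i : 'I_(k + 2 * E), root (map_poly ratr (g - f)) (zeta i)}.
  move=> i; rewrite !inE negbK => /andP[/eqP eps0 /eqP agree].
  move: agree; rewrite y_def // eps0 addr0 /evalC => agree.
  by rewrite /root rmorphB hornerD hornerN agree subrr.
have nterms_h : (nterms (g - f) <= 2 * T)%N.
  by rewrite (leq_trans (nterms_sub g f)) // mul2n -addnn leq_add.
have size_h : (size (g - f)%R <= D.+1)%N.
  by rewrite (leq_trans (size_polyD _ _)) // size_polyN geq_max size_g size_f.
have bound : ((2 * T).+1 ^ #|good| <= D ^ (2 * T))%N.
  rewrite cardE; apply: (@sparse_root_unity_bound _ _ (enum good) (fun i => p i)
    (fun i => zeta i)) h_neq0 D_gt0 nterms_h size_h _ _.
    by rewrite map_inj_uniq ?enum_uniq //; apply: incr_ord_inj p_incr.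
  move=> i; rewrite mem_enum => i_good; have [unity zeta_neq1] := zeta_root i (ltn_ord i).
  by split; rewrite ?p_prime ?p_big ?root_h //; apply/eqP; rewrite -unity_rootE.
have two_T_gt1 : (1 < 2 * T)%N by rewrite mul2n -addnn (leq_add T_gt0 T_gt0).
have := leq_trans (leq_pexp2l (ltn0Sn _) card_good)
  (leq_trans bound (expn_le_of_ln_ratio two_T_gt1 D_gt0 le_ratio)).
by rewrite leqNgt (ltn_exp2r _ _ k_gt0) ltnSn.
Qed.
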